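(* Let $\Sigma$ be a set of basic identities in an algebraic language $\mathcal L$ whose set of constant symbols is $C$, and suppose $\Sigma$ is consistent. Then for every cardinal $\kappa>|C|$, $\Sigma$ has a model of cardinality $\kappa$.
   Context: An $\mathcal L$-term is basic if it contains at most one nonnullary function symbol (so it is a variable, a constant symbol, or $F(u_1,\dots,u_m)$ with each $u_i$ a variable or constant symbol); an identity $s\approx t$ is basic if $s,t$ are basic. For a set $X$ of variables, the weak closure $\overline{\Sigma}$ of $\Sigma$ in the variables $X$ is the smallest set of basic identities containing $\Sigma$ such that: (i) $t\approx t\in\overline\Sigma$ for every basic term $t$ with variables from $X$; (ii) if $s\approx t\in\overline\Sigma$ then $t\approx s\in\overline\Sigma$; (iii) if $r\approx s, s\approx t\in\overline\Sigma$ then $r\approx t\in\overline\Sigma$; (iv) if $s\approx t\in\overline\Sigma$ and $\gamma\colon X\to X\cup C$ is any function, then $s[\gamma]\approx t[\gamma]\in\overline\Sigma$, where $s[\gamma]$ replaces each variable $x$ by $\gamma(x)$; (v) if $t$ is a basic term and $c\approx d\in\overline\Sigma$ for $c,d\in C$, then $t\approx t'\in\overline\Sigma$, where $t'$ is obtained from $t$ by replacing one occurrence of $c$ by $d$. Write $\Sigma\vdash_X\varphi$ if $\varphi\in\overline\Sigma$. $X$ is large enough if it contains at least two variables, $|X|$ is at least the arity of every function symbol occurring in $\Sigma$, and $|X|$ is at least the number of distinct variables occurring in any identity of $\Sigma$. $\Sigma$ is inconsistent if $\Sigma\vdash_X x\approx y$ for some distinct $x,y\in X$ with $X$ large enough,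 and consistent otherwise. *)

From mathcomp Require Import all_boot.
Set Implicit Arguments. Unset Strict Implicit. Unset Printing Implicit Defensive.

(* An algebraic language: constant symbols C, function symbols F with arities
   ar (the theorem assumes all symbols of F are nonnullary: nullary symbols
   are the constants in C). *)
Section Basic.
Variables (C F : Type) (ar : F -> nat).

Inductive atom : Type := AVar of nat | ACst of C.

Inductive bterm : Type :=
  | BAtom of atom
  | BApp (f : F) (u : 'I_(ar f) -> atom).

Definition identity : Type := (bterm * bterm)%type.

Definition atom_vars (a : atom) : seq nat :=
  match a with AVar x => [:: x] | ACst _ => [::] end.

Definition vars (t : bterm) : seq nat :=
  match t with
  | BAtom a => atom_vars a
  | BApp f u => flatten [seq atom_vars (u i) | i <- enum 'I_(ar f)]
  end.

Definition atom_subst (g : nat -> atom) (a : atom) : atom :=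
  match a with AVar x => g x | ACst c => ACst c end.

Definition subst (g : nat -> atom) (t : bterm) : bterm :=
  match t with
  | BAtom a => BAtom (atom_subst g a)
  | BApp f u => BApp (fun i => atom_subst g (u i))
  end.

(* gamma : X -> X u C (extended by the identity outside X) *)
Definition admissible (X : nat -> Prop) (g : nat -> atom) : Prop :=
  forall x, (X x -> match g x with AVar y => X y | ACst _ => True end)
            /\ (~ X x -> g x = AVar x).

Inductive replace_one (c d : C) : bterm -> bterm -> Prop :=
  | ro_atom : replace_one c d (BAtom (ACst c)) (BAtom (ACst d))
  | ro_app (f : F) (u : 'I_(ar f) -> atom) (i : 'I_(ar f)) :
      u i = ACst c ->
      replace_one c d (BApp u) (BApp (fun j => if j == i then ACst d else u j)).

Inductive weak_closure (X : nat -> Prop) (Sigma : identity -> Prop)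
  : identity -> Prop :=
  | wc_ax phi : Sigma phi -> weak_closure X Sigma phi
  | wc_refl t : (forall x, x \in vars t -> X x) -> weak_closure X Sigma (t, t)
  | wc_sym s t : weak_closure X Sigma (s, t) -> weak_closure X Sigma (t, s)
  | wc_trans r s t : weak_closure X Sigma (r, s) -> weak_closure X Sigma (s, t) ->
      weak_closure X Sigma (r, t)
  | wc_subst s t g : admissible X g -> weak_closure X Sigma (s, t) ->
      weak_closure X Sigma (subst g s, subst g t)
  | wc_const t t' c d :
      weak_closure X Sigma (BAtom (ACst c), BAtom (ACst d)) ->
      replace_one c d t t' -> weak_closure X Sigma (t, t').

Definition atleast (X : nat -> Prop) (n : nat) : Prop :=
  exists s : seq nat, [/\ uniq s, n <= size s & forall x, x \in s -> X x].

Definition head_sym (t : bterm) : option F :=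
  match t with BAtom _ => None | BApp f _ => Some f end.

Definition large_enough (X : nat -> Prop) (Sigma : identity -> Prop) : Prop :=
  [/\ atleast X 2,
      (forall phi f, Sigma phi ->
          head_sym phi.1 = Some f \/ head_sym phi.2 = Some f -> atleast X (ar f))
    & (forall phi, Sigma phi ->
          atleast X (size (undup (vars phi.1 ++ vars phi.2))))].

Definition inconsistent (Sigma : identity -> Prop) : Prop :=
  exists X, large_enough X Sigma /\
    exists x y, [/\ X x, X y, x <> y &
                    weak_closure X Sigma (BAtom (AVar x), BAtom (AVar y))].

Definition consistent (Sigma : identity -> Prop) : Prop := ~ inconsistent Sigma.

Record structure (M : Type) : Type := Structure {
  cst : C -> M;
  fn : forall f : F, ('I_(ar f) -> M) -> M }.

Definition eval_atom M (A : structure M) (v : nat -> M) (a : atom) : M :=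
  match a with AVar x => v x | ACst c => cst A c end.

Definition eval M (A : structure M) (v : nat -> M) (t : bterm) : M :=
  match t with
  | BAtom a => eval_atom A v a
  | BApp f u => fn A (fun i => eval_atom A v (u i))
  end.

Definition models M (A : structure M) (Sigma : identity -> Prop) : Prop :=
  forall phi, Sigma phi -> forall v : nat -> M, eval A v phi.1 = eval A v phi.2.

End Basic.

From Stdlib Require Import Classical ClassicalEpsilon FunctionalExtensionality PropExtensionality.
From mathcomp Require Import all_boot.
Set Implicit Arguments. Unset Strict Implicit. Unset Printing Implicit Defensive.

(* Write s ≡ t when Σ derives s ≈ t in all variables.  Consistency forces ≡
   to relate a variable to no atom but itself (rename it to a fresh variable),
   so on atoms ≡ only adds relations between constants.  The model lives on K
   itself: a constant c denotes the image of a chosen representative of its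
   ≡-class, and F(a) is the value of b whenever some faithful presentation
   F(u) of the tuple a (constants exactly at the positions of constant values,
   distinct variables for distinct values) derives F(u) ≡ b.  Two faithful
   presentations of a differ by a renaming of variables and a replacement of
   ≡-related constants, so F is well defined, and every instance of an
   identity of Σ is, after the canonical substitution, an instance at a
   faithful presentation. *)

Section ClassicalPick.
Variables (T : Type) (P : T -> Prop).

Definition opick : option T :=
  match excluded_middle_informative (exists x, P x) with
  | left H => Some (proj1_sig (constructive_indefinite_description _ H))
  | right _ => None
  end.

Variant opick_spec : option T -> Prop :=
  | OpickSome x of P x : opick_spec (Some x)
  | OpickNone of (forall x, ~ P x) : opick_spec None.

Lemma opickP : opick_spec opick.
Proof.
rewrite /opick; case: excluded_middle_informative => [H|H].
  by case: constructive_indefinite_description => x Px; constructor.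
by constructor=> x Px; apply: H; exists x.
Qed.

End ClassicalPick.

Section TermModel.
Variables (C F : Type) (ar : F -> nat) (Sigma : identity C ar -> Prop).

Definition derivable (s t : bterm C ar) :=
  weak_closure (fun _ => True) Sigma (s, t).

Local Notation "s ≡ t" := (derivable s t) (at level 70).
Local Notation tvar x := (BAtom ar (AVar C x)).
Local Notation tcst c := (BAtom ar (ACst c)).

Lemma admissible_all (g : nat -> atom C) : admissible (fun _ => True) g.
Proof. by move=> x; split=> [_|nT]; [case: (g x) | case: nT]. Qed.

Lemma derivable_refl t : t ≡ t.
Proof. exact: wc_refl. Qed.

Lemma derivable_sym s t : s ≡ t -> t ≡ s.
Proof. exact: wc_sym. Qed.

Lemma derivable_trans r s t : r ≡ s -> s ≡ t -> r ≡ t.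
Proof. exact: wc_trans. Qed.

Lemma derivable_subst g s t : s ≡ t -> subst g s ≡ subst g t.
Proof. exact: wc_subst (admissible_all g). Qed.

Definition cst_related (a b : atom C) :=
  exists c e, [/\ a = ACst c, b = ACst e & tcst c ≡ tcst e].

Lemma derivable_app_update f (u : 'I_(ar f) -> atom C) i b :
  u i = b \/ cst_related (u i) b ->
  BApp u ≡ BApp (fun j => if j == i then b else u j).
Proof.
case=> [<-|[c [e [ui -> ce]]]]; last exact: wc_const ce (ro_app _ ui).
have -> : (fun j => if j == i then u i else u j) = u.
  by apply: functional_extensionality => j; case: eqP => [->|].
exact: derivable_refl.
Qed.

Lemma derivable_app_congr f (u u' : 'I_(ar f) -> atom C) :
  (forall i, u i = u' i \/ cst_related (u i) (u' i)) -> BApp u ≡ BApp u'.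
Proof.
move=> uu'.
pose v k (j : 'I_(ar f)) := if j < k then u' j else u j.
have v_ge k : ar f <= k -> v k = u'.
  by move=> fk; apply: functional_extensionality => j; rewrite /v (leq_trans _ fk).
have vS k (kf : k < ar f) :
    v k.+1 = fun j => if j == Ordinal kf then u' (Ordinal kf) else v k j.
  apply: functional_extensionality => j; rewrite /v ltnS leq_eqVlt.
  have [->|] := eqVneq j (Ordinal kf); first by rewrite /= eqxx.
  by rewrite -val_eqE /= => /negbTE ->.
suff /(_ (ar f)) : forall k, BApp u ≡ BApp (v k) by rewrite v_ge.
elim=> [|k IH].
  by rewrite (_ : v 0 = u); [exact: derivable_refl | exact: functional_extensionality].
case: (ltnP k (ar f)) => [kf|fk]; last by rewrite v_ge ?(leq_trans fk) // -(v_ge k fk).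
rewrite vS; apply: derivable_trans IH _; apply: derivable_app_update.
by rewrite /v ltnn; apply: uu'.
Qed.

Lemma consistent_var_derivable :
  consistent Sigma -> forall x y, tvar x ≡ tvar y -> x = y.
Proof.
move=> Sigma_cons x y xy; have [//|/eqP nxy] := eqVneq x y; case: Sigma_cons.
have all_atleast n : atleast (fun _ => True) n.
  by exists (iota 0 n); rewrite iota_uniq size_iota.
by exists (fun _ => True); split; [split=> * | exists x, y].
Qed.

Hypothesis var_derivable : forall x y, tvar x ≡ tvar y -> x = y.

Definition rename_fresh x (z : nat) : atom C :=
  AVar C (if z == x then x.+1 else z).

Lemma derivable_var_succ t x : t ≡ tvar x -> ~ t ≡ tvar x.+1.
Proof.
move=> tx tx1; apply: (@n_Sn x); apply: var_derivable.
exact: derivable_trans (derivable_sym tx) tx1.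
Qed.

Lemma var_cst_not_derivable x c : ~ tvar x ≡ tcst c.
Proof.
move=> xc; apply: (derivable_var_succ (derivable_sym xc)).
have := derivable_sym (derivable_subst (rename_fresh x) xc).
by rewrite /= /rename_fresh eqxx.
Qed.

Lemma derivable_app_var f (u : 'I_(ar f) -> atom C) x :
  BApp u ≡ tvar x -> exists i, u i = AVar C x.
Proof.
move=> ux; apply: NNPP => x_notin_u; apply: (derivable_var_succ ux).
have <- : (fun i => atom_subst (rename_fresh x) (u i)) = u.
  apply: functional_extensionality => i; case ui: (u i) => [z|c] //=.
  rewrite /rename_fresh; case: eqP => // zx; case: x_notin_u; exists i.
  by rewrite ui zx.
by have := derivable_subst (rename_fresh x) ux; rewrite /= /rename_fresh eqxx.
Qed.

Lemma derivable_atom a b :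
  BAtom ar a ≡ BAtom ar b -> a = b \/ cst_related a b.
Proof.
case: a => [x|c]; case: b => [y|e] ab.
- by left; rewrite (var_derivable ab).
- by case: (var_cst_not_derivable ab).
- by case: (var_cst_not_derivable (derivable_sym ab)).
- by right; exists c, e.
Qed.

Variables (K : Type) (inj : C -> K) (d0 : K).
Hypothesis inj_inj : injective inj.

Definition cst_rep c := odflt c (opick (fun e => tcst c ≡ tcst e)).

Lemma derivable_cst_rep c : tcst c ≡ tcst (cst_rep c).
Proof. by rewrite /cst_rep; case: opickP => // /(_ c) []; apply: derivable_refl. Qed.

Lemma cst_rep_eq c e : tcst c ≡ tcst e -> cst_rep c = cst_rep e.
Proof.
move=> ce; rewrite /cst_rep.
have -> : (fun z => tcst c ≡ tcst z) = (fun z => tcst e ≡ tcst z).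
  apply: functional_extensionality => z; apply: propositional_extensionality.
  by split; [apply: derivable_trans (derivable_sym ce) | apply: derivable_trans ce].
by case: opickP => // /(_ e) []; apply: derivable_refl.
Qed.

Definition cstK c := inj (cst_rep c).

Lemma cstK_eq c e : cstK c = cstK e <-> tcst c ≡ tcst e.
Proof.
split=> [/inj_inj ce|/cst_rep_eq ce]; last by rewrite /cstK ce.
apply: derivable_trans (derivable_cst_rep c) _.
by rewrite ce; apply: derivable_sym (derivable_cst_rep e).
Qed.

Definition eval_atomK (w : nat -> K) (a : atom C) : K :=
  match a with AVar x => w x | ACst c => cstK c end.

Lemma derivable_atom_eval w a b :
  BAtom ar a ≡ BAtom ar b -> eval_atomK w a = eval_atomK w b.
Proof. by case/derivable_atom=> [->|[c [e [-> -> /cstK_eq]]]]. Qed.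

Definition presents f (u : 'I_(ar f) -> atom C) (w : nat -> K) (a : 'I_(ar f) -> K) :=
  [/\ forall i, eval_atomK w (u i) = a i,
      forall i, (exists c, u i = ACst c) <-> (exists c, a i = cstK c) &
      forall i j x y, u i = AVar C x -> u j = AVar C y -> a i = a j -> x = y].

Lemma presents_rename f (u1 u2 : 'I_(ar f) -> atom C) w1 w2 a :
  presents u1 w1 a -> presents u2 w2 a ->
  exists rho, forall i x, u1 i = AVar C x -> rho x = u2 i.
Proof.
move=> [ev1 cst1 _] [_ cst2 inj2].
exists (fun x => if opick (fun i => u1 i = AVar C x) is Some j then u2 j else AVar C x).
move=> i x u1i; case: opickP => [j u1j|/(_ i)//].
have aji : a j = a i by rewrite -ev1 -(ev1 i) u1j u1i.
have var2 k : u1 k = AVar C x -> exists y, u2 k = AVar C y.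
  move=> u1k; case u2k: (u2 k) => [y|c]; first by exists y.
  have /cst1 [c'] : exists c, a k = cstK c by apply/cst2; exists c.
  by rewrite u1k.
have [y u2j] := var2 _ u1j; have [z u2i] := var2 _ u1i.
by rewrite u2j u2i (inj2 _ _ _ _ u2j u2i aji).
Qed.

Lemma presents_transfer f (u1 u2 : 'I_(ar f) -> atom C) w1 w2 a b :
  presents u1 w1 a -> presents u2 w2 a -> BApp u1 ≡ BAtom ar b ->
  exists b', BApp u2 ≡ BAtom ar b' /\ eval_atomK w2 b' = eval_atomK w1 b.
Proof.
move=> P1 P2 u1b; have [rho rhoE] := presents_rename P1 P2.
case: P1 P2 => [ev1 cst1 _] [ev2 cst2 _].
exists (atom_subst rho b); split.
  apply: (derivable_trans _ (derivable_subst rho u1b)).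
  apply: derivable_sym; apply: derivable_app_congr => i /=.
  case u1i: (u1 i) => [x|c] /=; first by left; apply: rhoE.
  have [e u2i] : exists e, u2 i = ACst e by apply/cst2/cst1; exists c.
  right; exists c, e; split=> //; apply/cstK_eq.
  by have := ev1 i; have := ev2 i; rewrite u1i u2i /= => -> ->.
case: b u1b => [x|c] u1b //=.
have [i u1i] := derivable_app_var u1b.
by rewrite (rhoE _ _ u1i) ev2 -ev1 u1i.
Qed.

Definition app_value f (a : 'I_(ar f) -> K) (m : K) :=
  exists u w b, [/\ presents u w a, BApp u ≡ BAtom ar b & eval_atomK w b = m].

Lemma app_value_uniq f (a : 'I_(ar f) -> K) m1 m2 :
  app_value a m1 -> app_value a m2 -> m1 = m2.
Proof.
move=> [u1 [w1 [b1 [P1 u1b1 <-]]]] [u2 [w2 [b2 [P2 u2b2 <-]]]].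
have [b' [u2b' <-]] := presents_transfer P1 P2 u1b1.
by apply: derivable_atom_eval; apply: derivable_trans (derivable_sym u2b') u2b2.
Qed.

Lemma app_value_congr f f' (a : 'I_(ar f) -> K) (a' : 'I_(ar f') -> K) u u' w m :
  presents u w a -> presents u' w a' -> BApp u ≡ BApp u' ->
  app_value a m -> app_value a' m.
Proof.
move=> P P' uu' [u1 [w1 [b1 [P1 u1b1 <-]]]].
have [b [ub <-]] := presents_transfer P1 P u1b1.
by exists u', w, b; split=> //; apply: derivable_trans (derivable_sym uu') ub.
Qed.

Definition fnK f (a : 'I_(ar f) -> K) : K := odflt d0 (opick (app_value a)).

Lemma fnK_app_value f (a : 'I_(ar f) -> K) m : app_value a m -> fnK a = m.
Proof.
move=> am; rewrite /fnK; case: opickP => [m' am'|/(_ m) //].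
exact: app_value_uniq am' am.
Qed.

Lemma fnK_eq f f' (a : 'I_(ar f) -> K) (a' : 'I_(ar f') -> K) :
  (forall m, app_value a m <-> app_value a' m) -> fnK a = fnK a'.
Proof.
move=> aa'; rewrite /fnK (_ : app_value a = app_value a') //.
by apply: functional_extensionality => m; apply: propositional_extensionality.
Qed.

Definition canon_var (v : nat -> K) x := odflt x (opick (fun z => v z = v x)).

Lemma canon_var_eval v x : v (canon_var v x) = v x.
Proof. by rewrite /canon_var; case: opickP => // /(_ x). Qed.

Lemma canon_var_eq v x y : v x = v y -> canon_var v x = canon_var v y.
Proof. by move=> xy; rewrite /canon_var xy; case: opickP => // /(_ y). Qed.

Definition canon_subst (v : nat -> K) x : atom C :=
  if opick (fun c => v x = cstK c) is Some c then ACst c else AVar C (canon_var v x).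

Lemma canon_subst_eval v x : eval_atomK v (canon_subst v x) = v x.
Proof. by rewrite /canon_subst; case: opickP => [c ->|_] //=; rewrite canon_var_eval. Qed.

Lemma presents_canon f (u : 'I_(ar f) -> atom C) v :
  presents (fun i => atom_subst (canon_subst v) (u i)) v (fun i => eval_atomK v (u i)).
Proof.
split=> [i|i|i j x y]; case: (u i) => [xi|ci] //=.
- exact: canon_subst_eval.
- rewrite /canon_subst; case: opickP => [c ->|nc]; first by split=> _; exists c.
  by split=> -[c] // /nc.
- by split=> _; exists ci.
- case: (u j) => [xj|cj] //=; rewrite /canon_subst.
  case: opickP => [//|_]; case: opickP => [//|_] [<-] [<-].
  exact: canon_var_eq.
Qed.

Lemma app_value_instance f (u : 'I_(ar f) -> atom C) b v :
  BApp u ≡ BAtom ar b -> app_value (fun i => eval_atomK v (u i)) (eval_atomK v b).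
Proof.
move=> ub; exists (fun i => atom_subst (canon_subst v) (u i)), v.
exists (atom_subst (canon_subst v) b); split; first exact: presents_canon.
  exact: derivable_subst _ ub.
by case: b {ub} => [x|c] //=; rewrite canon_subst_eval.
Qed.

Definition termK := Structure cstK fnK.

Lemma termK_models : models termK Sigma.
Proof.
move=> [s t] st v /=; have {}st : s ≡ t by apply: wc_ax.
case: s t st => [a|f u] [b|f' u'] st.
- exact: derivable_atom_eval.
- by symmetry; apply: fnK_app_value; apply: app_value_instance; apply: derivable_sym.
- by apply: fnK_app_value; apply: app_value_instance.
- apply: fnK_eq => m; have uu' := derivable_subst (canon_subst v) st.
  split; apply: app_value_congr (presents_canon _ _) (presents_canon _ _) _.
    exact: uu'.
  exact: derivable_sym uu'.
Qed.
End TermModel.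

Theorem corollary4p5 (C F : Type) (ar : F -> nat) (Har : forall f, 0 < ar f)
  (Sigma : identity C ar -> Prop) :
  consistent Sigma ->
  forall K : Type,
    (exists i : C -> K, injective i) ->     (* |C| <= |K| *)
    ~ (exists j : K -> C, injective j) ->   (* not |K| <= |C| *)
    exists (M : Type) (A : structure C ar M),
      (exists h : M -> K, bijective h) /\ models A Sigma.
Proof.
move=> Sigma_cons K [i i_inj] K_gt_C.
have [d0] : inhabited K.
  apply: NNPP => K0; apply: K_gt_C.
  by exists (fun k => False_rect _ (K0 (inhabits k))) => k; case: (K0 (inhabits k)).
exists K, (termK Sigma i d0); split; first by exists id; exists id.
apply: (termK_models _ d0 i_inj) => x y; exact: consistent_var_derivable.
Qed.
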